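(* If $F=\{f_i\}_{i=1}^N$ is an equal norm tight frame for $\mathcal H$ and $G$ is a dual of $F$ such that $(F,G)\in\mathcal F^{(1)}$, then $G=S_F^{-1}F$.
   Context: $\mathcal H$ is a complex Hilbert space of finite dimension $n$, inner product linear in the first argument. A finite sequence $F=\{f_i\}_{i=1}^N$ is a frame if there are $0<A\le B$ with $A\|f\|^2\le\sum_{i}|\langle f,f_i\rangle|^2\le B\|f\|^2$ for all $f$; tight if one can take $A=B$; equal norm if $\|f_i\|$ is constant. $S_Ff=\sum_i\langle f,f_i\rangle f_i$ is the frame operator and $S_F^{-1}F=\{S_F^{-1}f_i\}_{i=1}^N$ the canonical dual. $G=\{g_i\}_{i=1}^N$ is a dual of $F$ if $f=\sum_i\langle f,g_i\rangle f_i$ for all $f$; $(F,G)$ is then an $(N,n)$ dual pair. The error operator for $\Lambda\subseteq\{1,\dots,N\}$ is $E_{\Lambda,F,G}f=\sum_{i\in\Lambda}\langle f,f_i\rangle g_i$. With $\|T\|_{\mathcal F}=\sqrt{\operatorname{tr}(T^*T)}$, $\epsilon^{(1)}_{F,G}=\max_{1\le i\le N}\|E_{\{i\},F,G}\|_{\mathcal F}$, $\epsilon^{(1)}=\inf\{\epsilon^{(1)}_{F,G}:(F,G)\text{ an }(N,n)\text{ dual pair}\}$, $\mathcal F^{(1)}=\{(F,G):\epsilon^{(1)}_{F,G}=\epsilon^{(1)}\}$. *)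

(* R : realType, complex numbers C = R[i] (mathcomp-real-closed),
   H = C^n represented by column vectors 'cV[R[i]]_n. *)
From mathcomp Require Import all_boot all_order all_algebra.
From mathcomp Require Import complex.
From mathcomp Require Import classical_sets reals.
Set Implicit Arguments. Unset Strict Implicit. Unset Printing Implicit Defensive.
Import Order.TTheory GRing.Theory Num.Theory.
Local Open Scope ring_scope.

Section Frames.
Variable R : realType.
Local Notation C := (R[i]).

Definition adjm m k (T : 'M[C]_(m, k)) : 'M[C]_(k, m) :=
  map_mx (fun z : C => (z^*)%C) T^T.

(* inner product, linear in the first argument *)
Definition ip n (f g : 'cV[C]_n) : C := \sum_(k < n) f k 0 * ((g k 0)^*)%C.

Definition abs2 (z : C) : R := @complex.Re R (z * (z^*)%C).

Definition vnorm n (f : 'cV[C]_n) : R := Num.sqrt (@complex.Re R (ip f f)).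

Definition is_frame n N (F : 'I_N -> 'cV[C]_n) : Prop :=
  exists A B : R, 0 < A /\ A <= B /\
    forall f : 'cV[C]_n,
      A * vnorm f ^+ 2 <= \sum_(i < N) abs2 (ip f (F i)) <= B * vnorm f ^+ 2.

Definition is_tight_frame n N (F : 'I_N -> 'cV[C]_n) : Prop :=
  exists A : R, 0 < A /\
    forall f : 'cV[C]_n,
      A * vnorm f ^+ 2 <= \sum_(i < N) abs2 (ip f (F i)) <= A * vnorm f ^+ 2.

Definition is_equal_norm n N (F : 'I_N -> 'cV[C]_n) : Prop :=
  forall i j, vnorm (F i) = vnorm (F j).

(* frame operator S_F, as the matrix with  S_F *m f = \sum_i <f,f_i> f_i *)
Definition frame_op n N (F : 'I_N -> 'cV[C]_n) : 'M[C]_n :=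
  \sum_(i < N) (F i *m adjm (F i)).

Definition canonical_dual n N (F : 'I_N -> 'cV[C]_n) : 'I_N -> 'cV[C]_n :=
  fun i => invmx (frame_op F) *m F i.

Definition is_dual n N (F G : 'I_N -> 'cV[C]_n) : Prop :=
  forall f : 'cV[C]_n, f = \sum_(i < N) ip f (G i) *: F i.

Definition dual_pair n N (F G : 'I_N -> 'cV[C]_n) : Prop :=
  is_frame F /\ is_dual F G.

(* error operator E_{L,F,G}, as the matrix with E *m f = \sum_{i in L} <f,f_i> g_i *)
Definition err_op n N (F G : 'I_N -> 'cV[C]_n) (L : {set 'I_N}) : 'M[C]_n :=
  \sum_(i in L) (G i *m adjm (F i)).

Definition frob n (T : 'M[C]_n) : R := Num.sqrt (@complex.Re R (\tr (adjm T *m T))).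

(* epsilon^(1)_{F,G} = max_i ||E_{{i},F,G}||_F  (all terms are >= 0) *)
Definition eps1 n N (F G : 'I_N -> 'cV[C]_n) : R :=
  \big[Num.max/0]_(i < N) frob (err_op F G [set i]).

Definition eps1_opt (n N : nat) : R :=
  inf [set e : R | exists F G : 'I_N -> 'cV[C]_n, dual_pair F G /\ e = eps1 F G].

Definition in_F1 n N (F G : 'I_N -> 'cV[C]_n) : Prop :=
  dual_pair F G /\ eps1 F G = eps1_opt n N.

End Frames.

From mathcomp Require Import all_boot all_order all_algebra.
From mathcomp Require Import complex.
From mathcomp Require Import classical_sets reals.
From mathcomp Require Import ring.
Import Order.TTheory GRing.Theory Num.Theory.
Local Open Scope ring_scope.

(* A tight frame with bound A has S_F = A I, so its canonical dual is
   {f_i / A}; if moreover ||f_i||^2 = c for all i, every error operator of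
   the canonical dual has Frobenius norm c / A, and taking traces gives
   N c = n A.  Optimality of G then forces ||g_i||^2 <= c / A^2, while
   sum_i <f_i, g_i> = tr I = n for any dual.  Hence
     sum_i ||g_i - f_i / A||^2 = sum_i ||g_i||^2 - 2 n / A + N c / A^2
                              <= N c / A^2 - n / A = 0. *)

Section Complex.
Context {R : realType}.
Local Notation C := R[i].

Lemma ge0_ReK [x : C] : 0 <= x -> ((complex.Re x)%:C)%C = x.
Proof. by case: x => a b /ger0_Im /= ->. Qed.

Lemma Re_ge0 (x : C) : 0 <= x -> 0 <= complex.Re x.
Proof. by rewrite lecE => /andP[]. Qed.

Lemma Re_sum I (r : seq I) (P : pred I) (f : I -> C) :
  complex.Re (\sum_(i <- r | P i) f i) = \sum_(i <- r | P i) complex.Re (f i).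
Proof. by apply: big_morph => // -[a b] [c d]. Qed.

Lemma ler_sqrtRe (x y : C) : 0 <= x -> 0 <= y ->
  (Num.sqrt (complex.Re x) <= Num.sqrt (complex.Re y)) = (x <= y).
Proof.
move=> x_ge0 y_ge0; rewrite ler_sqrt ?Re_ge0 //.
by rewrite -{2}(ge0_ReK x_ge0) -{2}(ge0_ReK y_ge0) lecR.
Qed.

End Complex.

Section Adjoint.
Context {R : realType}.
Local Notation C := R[i].

Lemma adjmM m k p (A : 'M[C]_(m, k)) (B : 'M[C]_(k, p)) :
  adjm (A *m B) = adjm B *m adjm A.
Proof. by rewrite /adjm trmx_mul map_mxM. Qed.

Lemma adjmD m k (A B : 'M[C]_(m, k)) : adjm (A + B) = adjm A + adjm B.
Proof. by apply/matrixP=> i j; rewrite !mxE raddfD. Qed.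

Lemma adjmK m k (A : 'M[C]_(m, k)) : adjm (adjm A) = A.
Proof. by apply/matrixP=> i j; rewrite !mxE conjcK. Qed.

Lemma adjm_delta n (i : 'I_n) :
  adjm (delta_mx i 0) = delta_mx 0 i :> 'M[C]_(1, n).
Proof.
apply/matrixP => a b; rewrite !mxE andbC.
by case: (_ && _); [exact: conjc1 | exact: conjc0].
Qed.

Lemma mulmx_colP m n (A B : 'M[C]_(m, n)) :
  (forall x : 'cV[C]_n, A *m x = B *m x) -> A = B.
Proof.
move=> eqAB; apply/matrixP => i j.
have := congr1 (fun v : 'cV[C]_m => v i 0) (eqAB (delta_mx j 0)).
by rewrite -!colE !mxE.
Qed.

End Adjoint.

Section InnerProduct.
Context {R : realType} {n : nat}.
Local Notation C := R[i].
Implicit Types (f g u v w : 'cV[C]_n).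

Lemma ip_mx f g : ip f g = (adjm g *m f) 0 0.
Proof. by rewrite /ip !mxE; apply: eq_bigr => k _; rewrite !mxE mulrC. Qed.

Lemma ip_conj f g : ip g f = ((ip f g)^*)%C.
Proof.
by rewrite /ip rmorph_sum; apply: eq_bigr => k _; rewrite rmorphM /= conjcK mulrC.
Qed.

Lemma ipBl u v w : ip (u - v) w = ip u w - ip v w.
Proof. by rewrite /ip -sumrB; apply: eq_bigr => k _; rewrite !mxE mulrBl. Qed.

Lemma ipZl (a : C) u w : ip (a *: u) w = a * ip u w.
Proof. by rewrite /ip mulr_sumr; apply: eq_bigr => k _; rewrite mxE mulrA. Qed.

Lemma ipBr u v w : ip w (u - v) = ip w u - ip w v.
Proof. by rewrite ip_conj ipBl rmorphB /= -!ip_conj. Qed.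

Lemma ipZr (a : C) u w : ip u (a *: w) = (a^*)%C * ip u w.
Proof. by rewrite ip_conj ipZl rmorphM /= -ip_conj. Qed.

Lemma ip_ge0 f : 0 <= ip f f.
Proof. by apply: sumr_ge0 => k _; apply: mulcJ_ge0. Qed.

Lemma ip_eq0 f : ip f f = 0 -> f = 0.
Proof.
move=> /psumr_eq0P f0; apply/matrixP => k j; rewrite (ord1 j) mxE.
have /eqP := f0 (fun k _ => mulcJ_ge0 (f k 0)) k isT.
by rewrite mulf_eq0 conjc_eq0 orbb => /eqP.
Qed.

Lemma vnorm_sqr f : vnorm f ^+ 2 = complex.Re (ip f f).
Proof. by rewrite sqr_sqrtr // Re_ge0 // ip_ge0. Qed.

Lemma outer_mulmx u v f : u *m adjm v *m f = ip f v *: u.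
Proof. by rewrite -mulmxA (mx11_scalar (adjm v *m f)) -ip_mx mul_mx_scalar. Qed.

Lemma mxtrace_outer u v : \tr (u *m adjm v) = ip u v.
Proof. by rewrite mxtrace_mulC trace_mx11 -ip_mx. Qed.

Lemma frob_outer g f :
  frob (g *m adjm f) = Num.sqrt (complex.Re (ip g g * ip f f)).
Proof.
rewrite /frob adjmM adjmK mulmxA -(mulmxA f) (mx11_scalar (adjm g *m g)) -ip_mx.
by rewrite mul_mx_scalar -scalemxAl mxtraceZ mxtrace_outer.
Qed.

(* Polarization: test the form at x + y and at x + i y (this needs complex scalars). *)
Lemma quadform_eq0 (T : 'M[C]_n) : (forall x, ip (T *m x) x = 0) -> T = 0.
Proof.
move=> T0; pose Q x y := ip (T *m x) y.
have QQ x : Q x x = 0 by exact: T0.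
have QDl x y z : Q (x + y) z = Q x z + Q y z by rewrite /Q !ip_mx mulmxDr mulmxDr mxE.
have QDr x y z : Q z (x + y) = Q z x + Q z y by rewrite /Q !ip_mx adjmD mulmxDl mxE.
have QZl (a : C) x y : Q (a *: x) y = a * Q x y by rewrite /Q -scalemxAr ipZl.
have QZr (a : C) x y : Q x (a *: y) = (a^*)%C * Q x y by rewrite /Q ipZr.
have Q0 x y : Q x y = 0.
  have sym0 : Q x y + Q y x = 0.
    by move: (QQ (x + y)); rewrite QDl !QDr !QQ add0r addr0.
  have conj_i : ('i%C : C)^*%C = - 'i%C by apply/eqP; rewrite eq_complex /= oppr0 !eqxx.
  have skew0 : - 'i%C * Q x y + 'i%C * Q y x = 0.
    move: (QQ (x + 'i%C *: y)).
    by rewrite QDl !QDr !QQ QZr QZl conj_i add0r addr0.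
  have : (2%:R * 'i%C) * Q x y = 0.
    have -> : (2%:R * 'i%C) * Q x y =
        'i%C * (Q x y + Q y x) - (- 'i%C * Q x y + 'i%C * Q y x) by ring.
    by rewrite sym0 skew0 mulr0 subr0.
  move/eqP; rewrite !mulf_eq0 pnatr_eq0 /= => /orP[|/eqP //].
  by rewrite eq_complex /= oner_eq0 andbF.
apply/matrixP => i j; have := Q0 (delta_mx j 0) (delta_mx i 0).
by rewrite /Q ip_mx adjm_delta -rowE -colE !mxE.
Qed.

End InnerProduct.

Section Frames.
Context {R : realType} {n N : nat} {F : 'I_N -> 'cV[R[i]]_n}.
Local Notation C := R[i].

Lemma frame_op_mulmx f : frame_op F *m f = \sum_i ip f (F i) *: F i.
Proof. by rewrite /frame_op mulmx_suml; apply: eq_bigr => i _; rewrite outer_mulmx. Qed.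

Lemma ip_frame_op f : ip (frame_op F *m f) f = \sum_i ip f (F i) * ((ip f (F i))^*)%C.
Proof.
rewrite frame_op_mulmx ip_mx mulmx_sumr summxE; apply: eq_bigr => i _.
by rewrite -scalemxAr mxE -ip_mx -ip_conj.
Qed.

Lemma tight_frame_opE :
  is_tight_frame F -> exists2 A : R, 0 < A & frame_op F = ((A%:C)%C)%:M.
Proof.
move=> [A [A_gt0 tightA]]; exists A => //; apply/eqP; rewrite -subr_eq0; apply/eqP.
apply: quadform_eq0 => f; rewrite mulmxBl ipBl mul_scalar_mx ipZl ip_frame_op.
have /andP[leA geA] := tightA f.
have sumA : \sum_i abs2 (ip f (F i)) = A * vnorm f ^+ 2 by apply/le_anti/andP.
have sum_ge0 : 0 <= \sum_i ip f (F i) * ((ip f (F i))^*)%C.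
  by apply: sumr_ge0 => i _; exact: mulcJ_ge0.
rewrite -(ge0_ReK sum_ge0) Re_sum [X in (X%:C)%C]sumA vnorm_sqr.
by rewrite -{2}(ge0_ReK (ip_ge0 f)) -rmorphM subrr.
Qed.

Lemma mxtrace_frame_op : \tr (frame_op F) = \sum_i ip (F i) (F i).
Proof. by rewrite /frame_op raddf_sum /=; apply: eq_bigr => i _; rewrite mxtrace_outer. Qed.

Lemma dual_sum_ip [G] : is_dual F G -> \sum_i ip (F i) (G i) = n%:R.
Proof.
move=> dualG; have resolution : \sum_i F i *m adjm (G i) = 1%:M.
  apply: mulmx_colP => f; rewrite mul1mx mulmx_suml {2}(dualG f).
  by apply: eq_bigr => i _; rewrite outer_mulmx.
rewrite -mxtrace1 -resolution raddf_sum /=.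
by apply: eq_bigr => i _; rewrite mxtrace_outer.
Qed.

Lemma frob_err_op1 G i :
  frob (err_op F G [set i]) = Num.sqrt (complex.Re (ip (G i) (G i) * ip (F i) (F i))).
Proof. by rewrite /err_op big_set1 frob_outer. Qed.

Lemma in_F1_eps1_le [G G'] : in_F1 F G -> dual_pair F G' -> eps1 F G <= eps1 F G'.
Proof.
move=> [_ ->] pairG'; apply: ge_inf; last by exists F, G'.
by exists 0 => e [F0 [G0 [_ ->]]]; exact: bigmax_ge_id.
Qed.

Lemma equal_norm_ipE : is_equal_norm F -> exists c : C, forall i, ip (F i) (F i) = c.
Proof.
case: N F => [|N'] F' eqF; first by exists 0 => -[].
exists (ip (F' ord0) (F' ord0)) => i.
have := congr1 (fun x => x ^+ 2) (eqF i ord0); rewrite /= !vnorm_sqr => eqRe.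
by rewrite -(ge0_ReK (ip_ge0 (F' i))) eqRe ge0_ReK // ip_ge0.
Qed.

End Frames.

Section ScalarFrameOperator.
Context {R : realType} {n N : nat} {F : 'I_N -> 'cV[R[i]]_n} {A : R}.
Hypotheses (A_gt0 : 0 < A) (SF : frame_op F = ((A%:C)%C)%:M).
Local Notation C := R[i].
Local Notation a := ((A%:C)%C : C).

Let a_neq0 : a != 0. Proof. by rewrite gt_eqF // ltcR. Qed.

Let conj_inv_a : ((a^-1)^*)%C = a^-1.
Proof. by rewrite conjc_inv conjc_real. Qed.

Lemma canonical_dual_scalar i : canonical_dual F i = a^-1 *: F i.
Proof. by rewrite /canonical_dual SF invmx_scalar mul_scalar_mx. Qed.

Lemma is_dual_canonical_scalar : is_dual F (canonical_dual F).
Proof.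
move=> f; under eq_bigr => i _ do rewrite canonical_dual_scalar ipZr conj_inv_a -scalerA.
by rewrite -scaler_sumr -frame_op_mulmx SF mul_scalar_mx scalerA mulVf // scale1r.
Qed.

Section EqualNorm.
Context {c : C}.
Hypothesis normF : forall i, ip (F i) (F i) = c.

Lemma equal_norm_trace : c *+ N = a *+ n.
Proof.
rewrite -(mxtrace_scalar n a) -SF mxtrace_frame_op.
by rewrite (eq_bigr (fun=> c)) // sumr_const card_ord.
Qed.

Lemma equal_norm_gt0 : (0 < n)%N -> 0 < c.
Proof.
move=> n_gt0; have an_gt0 : 0 < a *+ n by rewrite pmulrn_lgt0 // ltcR.
have [N0 | N_gt0] := posnP N.
  by move: an_gt0; rewrite -equal_norm_trace N0 mulr0n ltxx.
by rewrite -(pmulrn_lgt0 _ N_gt0) equal_norm_trace.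
Qed.

Lemma optimal_dual_norm_le [G] :
  in_F1 F G -> 0 < c -> forall i, ip (G i) (G i) <= a^-1 * a^-1 * c.
Proof.
move=> optG c_gt0 i.
have pair_canonical : dual_pair F (canonical_dual F).
  by split; [case: optG => -[] | exact: is_dual_canonical_scalar].
have eps1_canonical : eps1 F (canonical_dual F) <=
    Num.sqrt (complex.Re (a^-1 * a^-1 * c * c)).
  apply: bigmax_le => [|j _]; first exact: sqrtr_ge0.
  by rewrite frob_err_op1 canonical_dual_scalar ipZl ipZr conj_inv_a !normF mulrA.
have := le_trans (in_F1_eps1_le optG pair_canonical) eps1_canonical.
move/(le_trans (le_bigmax _ _ i)); rewrite frob_err_op1 normF.
rewrite ler_sqrtRe ?mulr_ge0 ?ip_ge0 ?invr_ge0 ?ler0c ?(ltW A_gt0) ?(ltW c_gt0) //.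
by rewrite ler_pM2r.
Qed.

Lemma sum_ip_sub_canonical [G] : is_dual F G ->
  \sum_i ip (G i - a^-1 *: F i) (G i - a^-1 *: F i) = \sum_i ip (G i) (G i) - a^-1 *+ n.
Proof.
move=> dualG; have sum_FG := dual_sum_ip dualG.
have sum_GF : \sum_i ip (G i) (F i) = n%:R.
  by under eq_bigr => i _ do rewrite ip_conj; rewrite -rmorph_sum sum_FG /= conjc_nat.
under eq_bigr => i _ do rewrite !ipBl !ipBr !ipZl !ipZr conj_inv_a normF.
rewrite !sumrB -!mulr_sumr sum_GF sum_FG sumr_const card_ord.
rewrite equal_norm_trace [a^-1 * (a *+ n)]mulrnAr mulVf //.
by rewrite -[a^-1 *+ n]mulr_natr subrr subr0.
Qed.

Lemma dual_eq_canonical_of_norm_le [G] : is_dual F G ->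
  (forall i, ip (G i) (G i) <= a^-1 * a^-1 * c) -> G = canonical_dual F.
Proof.
move=> dualG normG.
have sum0 : \sum_i ip (G i - a^-1 *: F i) (G i - a^-1 *: F i) = 0.
  apply/le_anti/andP; split; last by apply: sumr_ge0 => i _; exact: ip_ge0.
  rewrite sum_ip_sub_canonical // subr_le0.
  apply: le_trans (ler_sum _ (fun i _ => normG i)) _.
  rewrite sumr_const card_ord -mulrnAr equal_norm_trace mulrnAr.
  by rewrite -mulrA mulVf // mulr1.
apply: boolp.funext => i; rewrite canonical_dual_scalar; apply/eqP; rewrite -subr_eq0.
by apply/eqP/ip_eq0; apply: (psumr_eq0P _ sum0) => // j _; exact: ip_ge0.
Qed.

End EqualNorm.

End ScalarFrameOperator.

Theorem corollary3p5 (R : realType) (n N : nat) (F G : 'I_N -> 'cV[R[i]]_n) :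
  is_frame F -> is_tight_frame F -> is_equal_norm F ->
  is_dual F G -> in_F1 F G ->
  G = canonical_dual F.
Proof.
move=> _ tightF eqnF dualG optG.
case: n F G tightF eqnF dualG optG => [|n] F G tightF eqnF dualG optG.
  by apply: boolp.funext => i; apply/matrixP => -[] //.
have [A A_gt0 SF] := tight_frame_opE tightF.
have [c normF] := equal_norm_ipE eqnF.
have c_gt0 := equal_norm_gt0 A_gt0 SF normF (ltn0Sn n).
apply: (dual_eq_canonical_of_norm_le A_gt0 SF normF dualG).
exact: (optimal_dual_norm_le A_gt0 SF normF optG c_gt0).
Qed.
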